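(* Let $C\subset\mathbb{R}^d$ be a convex body and $\mu$ a non-$C$-degenerate measure with $\mu(C)>0$ and $\mu(\mathbb{R}^d)=\infty$. Let $B\subset\mathbb{R}^d$ be a Euclidean ball with $\mu(B)\ge\mu(C)$, and let $C'$ be a homothet of $C$ such that $\mu(C'\cap B)<\mu(C)$ but $C'\not\subset B$. Then $C'\cap B$ can be covered by a finite collection of homothets of $C$, each of $\mu$-measure at most $\mu(C)$, none of which is fully contained in $B$.
   Context: A convex body is a convex compact set with nonempty interior; a homothet of $C$ is $\lambda C+x$ with $\lambda>0$, $x\in\mathbb{R}^d$. Measures are Borel measures on $\mathbb{R}^d$ finite on compact sets; $\mu$ is non-$C$-degenerate if it vanishes on the boundary of every homothet of $C$. *)

(* R^d is modelled as 'rV[R]_d (product topology =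
   Euclidean topology); Borel sets = sigma-algebra generated by open sets. *)
From HB Require Import structures.
From mathcomp Require Import all_boot all_order all_algebra.
From mathcomp Require Import all_classical all_reals all_analysis.
Set Implicit Arguments. Unset Strict Implicit. Unset Printing Implicit Defensive.
Import Order.TTheory GRing.Theory Num.Theory.
Import numFieldTopology.Exports numFieldNormedType.Exports.
Local Open Scope classical_set_scope.
Local Open Scope ring_scope.

Definition borelRd (R : realType) (d : nat) :=
  g_sigma_algebraType (@open 'rV[R]_d).

Definition convex_set (R : realType) (d : nat) (C : set 'rV[R]_d) : Prop :=
  forall x y t, C x -> C y -> 0 <= t -> t <= 1 -> C (t *: x + (1 - t) *: y).

Definition convex_body (R : realType) (d : nat) (C : set 'rV[R]_d) : Prop :=
  [/\ convex_set C, compact C & (interior C !=set0)].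

Definition homothet (R : realType) (d : nat) (C : set 'rV[R]_d)
    (lam : R) (x : 'rV[R]_d) : set 'rV[R]_d :=
  [set lam *: c + x | c in C].

Definition is_homothet (R : realType) (d : nat) (C K : set 'rV[R]_d) : Prop :=
  exists lam x, 0 < lam /\ K = homothet C lam x.

Definition boundary (R : realType) (d : nat) (A : set 'rV[R]_d) : set 'rV[R]_d :=
  closure A `\` interior A.

Definition euclid_ball (R : realType) (d : nat) (c : 'rV[R]_d) (r : R)
    : set 'rV[R]_d :=
  [set x | \sum_(i < d) (x ord0 i - c ord0 i) ^+ 2 <= r ^+ 2].

Definition is_euclid_ball (R : realType) (d : nat) (B : set 'rV[R]_d) : Prop :=
  exists c r, 0 < r /\ B = euclid_ball c r.

Definition locally_finite_measure (R : realType) (d : nat)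
    (mu : {measure set (borelRd R d) -> \bar R}) : Prop :=
  forall K : set 'rV[R]_d, compact K -> (mu K < +oo)%E.

Definition non_degenerate (R : realType) (d : nat) (C : set 'rV[R]_d)
    (mu : {measure set (borelRd R d) -> \bar R}) : Prop :=
  forall lam x, 0 < lam -> mu (boundary (homothet C lam x)) = 0%E.

(* Enlarge C' about an interior point to a slightly larger homothet L with
   mu (L `&` B) still below mu C: the enlargements are compact and decrease to
   C', so continuity of mu from above applies, and every point p of C' `&` B
   lies uniformly deep inside L.  Shrink L towards p: at the infimal ratio t_p
   for which the shrunken copy leaves B, the copy still lies in B because B is
   closed, so copies of ratio slightly above t_p leave B while their part
   outside B has measure as small as we like, again by continuity from above.
   Taking that part below mu C - mu (L `&` B) gives a homothet of measure at
   most mu C, not inside B, containing a ball around p; compactness of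
   C' `&` B extracts a finite subcover. *)

From Pilot Require Import Defs.
From HB Require Import structures.
From mathcomp Require Import all_boot all_order all_algebra.
From mathcomp Require Import all_classical all_reals all_analysis.
From mathcomp Require Import ring.
Import Order.TTheory GRing.Theory Num.Theory.
Import numFieldTopology.Exports numFieldNormedType.Exports.
Local Open Scope classical_set_scope.
Local Open Scope ring_scope.

Set Implicit Arguments.
Unset Strict Implicit.
Unset Printing Implicit Defensive.

Section Homothety.
Variables (R : realType) (d : nat).
Implicit Types (K : set 'rV[R]_d) (c p x z : 'rV[R]_d).

Lemma homothetA K l x t b :
  homothet (homothet K l x) t b = homothet K (t * l) (t *: x + b).
Proof.
apply/seteqP; split => z.
- case=> _ [k Kk <-] <-; exists k => //.
  by rewrite scalerDr scalerA addrA.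
- case=> k Kk <-; exists (l *: k + x); first by exists k.
  by rewrite scalerDr scalerA addrA.
Qed.

Lemma homothet1 K : homothet K 1 0 = K.
Proof.
apply/seteqP; split => z.
- by case=> k Kk <-; rewrite scale1r addr0.
- by move=> Kz; exists z => //; rewrite scale1r addr0.
Qed.

Lemma convex_homothet K l x :
  Defs.convex_set K -> Defs.convex_set (homothet K l x).
Proof.
move=> cK _ _ t [a Ka <-] [b Kb <-] t0 t1.
exists (t *: a + (1 - t) *: b); first exact: cK.
apply/rowP => i; rewrite !mxE; ring.
Qed.

Lemma compact_homothet K l x : compact K -> compact (homothet K l x).
Proof.
move=> cK; apply: continuous_compact => //.
apply: continuous_subspaceT => y.
by apply: continuousD; [exact: scaler_continuous | exact: cst_continuous].
Qed.

Lemma ball_homothet K c r l x : 0 < l -> ball c r `<=` K ->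
  ball (l *: c + x) (l * r) `<=` homothet K l x.
Proof.
move=> l0 cK z; rewrite -ball_normE /= => cz.
exists (l^-1 *: (z - x)); last first.
  by rewrite scalerA divff ?lt0r_neq0 // scale1r subrK.
apply: cK; rewrite -ball_normE /=.
rewrite -[c](scalerK (lt0r_neq0 l0)) -scalerBr normrZ gtr0_norm ?invr_gt0 //.
by rewrite opprB addrA ltr_pdivrMl.
Qed.

Definition dilation K t p := homothet K t ((1 - t) *: p).

Lemma compact_dilation K t p : compact K -> compact (dilation K t p).
Proof. exact: compact_homothet. Qed.

Lemma dilation1 K p : dilation K 1 p = K.
Proof. by rewrite /dilation subrr scale0r homothet1. Qed.

Lemma dilation0_sub K p : dilation K 0 p `<=` [set p].
Proof. by move=> _ [k _ <-]; rewrite scale0r add0r subr0 scale1r. Qed.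

Lemma le_dilation K p s t :
  Defs.convex_set K -> K p -> 0 <= s -> s <= t -> 0 < t ->
  dilation K s p `<=` dilation K t p.
Proof.
move=> cK Kp s0 st t0 _ [k Kk <-].
exists ((s / t) *: k + (1 - s / t) *: p).
  by apply: cK => //; rewrite ?divr_ge0 ?ler_pdivrMr ?mul1r // ltW.
apply/rowP => i; rewrite !mxE; field; exact: lt0r_neq0.
Qed.

Lemma dilation_sub K p t : Defs.convex_set K -> K p -> 0 < t -> t <= 1 ->
  dilation K t p `<=` K.
Proof.
move=> cK Kp t0 t1; rewrite -{2}(dilation1 K p).
by apply: le_dilation => //; exact: ltW.
Qed.

Lemma dilation_homothet K l x t p :
  dilation (homothet K l x) t p = homothet K (t * l) (t *: x + (1 - t) *: p).
Proof. exact: homothetA. Qed.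

Lemma ball_dilation K p r t : 0 < t -> ball p r `<=` K ->
  ball p (t * r) `<=` dilation K t p.
Proof.
move=> t0 pK; have := ball_homothet (x := (1 - t) *: p) t0 pK.
by rewrite -scalerDl addrC subrK scale1r.
Qed.

Lemma ball_sub_enlargement K c rho p e :
  Defs.convex_set K -> ball c rho `<=` K -> K p -> 0 < e ->
  ball p (e * rho) `<=` dilation K (1 + e) c.
Proof.
move=> cK cBK Kp e0 z; rewrite -ball_normE /= => pz.
have e1 : 0 < 1 + e by rewrite ltr_wpDr // ltW.
pose y := c + e^-1 *: (z - p).
have Ky : K y.
  apply: cBK; rewrite -ball_normE /= opprD addrA subrr add0r normrN normrZ.
  by rewrite gtr0_norm ?invr_gt0 // distrC ltr_pdivrMl.
exists ((1 + e)^-1 *: p + (1 - (1 + e)^-1) *: y).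
  by apply: cK; rewrite ?invr_ge0 ?invf_le1 ?lerDl ?ltW.
rewrite /y; apply/rowP => i; rewrite !mxE; field.
by rewrite !lt0r_neq0.
Qed.

Lemma dilation_approx K p M t s z : (forall k, K k -> `|k - p| <= M) ->
  dilation K t p z -> exists2 w, dilation K s p w & `|z - w| <= `|t - s| * M.
Proof.
move=> KM [k Kk <-]; exists (s *: k + (1 - s) *: p); first by exists k.
have -> : t *: k + (1 - t) *: p - (s *: k + (1 - s) *: p) = (t - s) *: (k - p).
  by apply/rowP => i; rewrite !mxE; ring.
by rewrite normrZ ler_wpM2l ?KM.
Qed.

End Homothety.

Lemma natSinv_lt (R : archiRealFieldType) (e : R) : 0 < e ->
  exists n : nat, n.+1%:R^-1 < e.
Proof.
move=> e0; exists (Num.truncn e^-1).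
by rewrite invf_plt ?posrE ?ltr0n // truncnS_gt.
Qed.

Lemma continuous_sum (R : realType) (T : topologicalType) (I : Type)
    (r : seq I) (f : I -> T -> R) :
  (forall i, continuous (f i)) -> continuous (fun x => \sum_(i <- r) f i x).
Proof.
move=> fc; elim: r => [|i r IH].
  by under eq_fun do rewrite big_nil; exact: cst_continuous.
under eq_fun do rewrite big_cons.
by move=> x; apply: continuousD; [exact: fc | exact: IH].
Qed.

Lemma compact_ord_cover (T : ptopologicalType) (A : set T) (U : T -> set T) :
  compact A -> (forall p, A p -> open (U p) /\ U p p) ->
  exists n (q : 'I_n -> T),
    (forall i, A (q i)) /\ A `<=` \bigcup_(i in [set: 'I_n]) U (q i).
Proof.
rewrite compact_cover => /(_ _ A U) cover_fin AU.
have [D DA AD] := cover_fin (fun p Ap => (AU p Ap).1)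
  (fun p Ap => ex_intro2 _ _ p Ap (AU p Ap).2).
pose s := finmap.enum_fset D.
exists (size s), (fun i => nth point s i); split => [i|z Az].
  by have := DA _ (mem_nth point (ltn_ord i)); rewrite inE.
have [q qD Uqz] := AD z Az.
have qs : (index q s < size s)%N by rewrite index_mem.
by exists (Ordinal qs) => //=; rewrite nth_index.
Qed.

Section NormedSpace.
Variables (R : realType) (V : normedModType R).

Lemma closed_approx (A : set V) z : closed A ->
  (forall e, 0 < e -> exists2 w, A w & `|z - w| < e) -> A z.
Proof.
move=> cA zA; rewrite (closure_id A).1 // => U /nbhs_ballP[e /= e0 eU].
have [w Aw zw] := zA e e0.
by exists w; split => //; apply: eU; rewrite -ball_normE.
Qed.

Lemma compact_dist_bounded (A : set V) p : compact A ->
  exists2 M, 0 < M & forall k, A k -> `|k - p| <= M.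
Proof.
move=> /compact_bounded[M [Mr AM]].
exists (`|M| + 1 + `|p|) => [|k Ak]; first by rewrite ltr_wpDr // ltr_wpDl.
apply: le_trans (ler_normB _ _) _; rewrite lerD2r; apply: (AM (`|M| + 1)) => //.
by rewrite (le_lt_trans (real_ler_norm Mr)) // ltrDl.
Qed.

End NormedSpace.

Lemma nonincreasing_measure_lt (R : realType) (dT : measure_display)
    (T : measurableType dT) (mu : {measure set T -> \bar R})
    (F : nat -> set T) (a : R) :
  (mu (F 0%N) < +oo)%E -> (forall n, measurable (F n)) ->
  (forall n m, (n <= m)%N -> F m `<=` F n) ->
  (mu (\bigcap_n F n) < a%:E)%E -> exists n, (mu (F n) < a%:E)%E.
Proof.
move=> F0 mF F_mono Fa.
have mcapF := bigcapT_measurable mF.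
have F_noninc : {homo F : n m / (n <= m)%N >-> (m <= n)%O}.
  by move=> n m nm; apply/subsetPset; exact: F_mono.
have := nonincreasing_cvg_mu F0 mF mcapF F_noninc.
have capF_fin : mu (\bigcap_n F n) \is a fin_num.
  rewrite ge0_fin_numE ?measure_ge0 //; apply: le_lt_trans F0.
  by apply: le_measure; rewrite ?inE //; exact: bigcap_inf.
move: Fa; rewrite -(fineK capF_fin) lte_fin => Fa.
move=> /(_ _ (nbhs_open_ereal_lt Fa)).
by case=> N _ FN; exists N; exact: (FN N (leqnn N)).
Qed.

Section Euclidean.
Variables (R : realType) (d : nat).

Lemma closed_borel_measurable (A : set 'rV[R]_d) : closed A ->
  measurable (A : set (borelRd R d)).
Proof.
move=> cA; rewrite -(setCK A); apply: measurableC.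
by apply: sub_sigma_algebra; exact: closed_openC.
Qed.

Lemma closed_euclid_ball (c : 'rV[R]_d) r : closed (euclid_ball c r).
Proof.
apply: (@preimage_closed _ _ _ [set y | y <= r ^+ 2]); last exact: closed_le.
move=> x _; apply: continuous_sum => i y.
have ci : continuous (fun z : 'rV[R]_d => z ord0 i - c ord0 i).
  move=> z; apply: continuousB; first exact: coord_continuous.
  exact: cst_continuous.
exact: (continuousM (ci y) (ci y)).
Qed.

End Euclidean.

Lemma compact_borel_measurable (R : realType) (d : nat) (A : set 'rV[R]_d) :
  compact A -> measurable (A : set (borelRd R d)).
Proof.
by move=> cA; apply: closed_borel_measurable; exact: compact_closed.
Qed.

Lemma dilation_limit (R : realType) (d : nat) (K A : set 'rV[R]_d) p
    (u v : nat -> R) z :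
  compact K -> closed A -> (forall n, `|u n - v n| <= n.+1%:R^-1) ->
  (forall n, dilation K (u n) p z) -> (forall n, dilation K (v n) p `<=` A) ->
  A z.
Proof.
move=> cK cA uv Kz KA; have [M M0 KM] := compact_dist_bounded p cK.
apply: closed_approx cA _ => e e0.
have [n ne] := natSinv_lt (divr_gt0 e0 M0).
have [w Kw zw] := dilation_approx (v n) KM (Kz n).
exists w; first exact: KA Kw.
apply: le_lt_trans zw _; rewrite -ltr_pdivlMr //.
exact: le_lt_trans (uv n) ne.
Qed.

Section Escape.
Variables (R : realType) (d : nat) (K B : set 'rV[R]_d) (p : 'rV[R]_d).
Hypotheses (cvxK : Defs.convex_set K) (cptK : compact K) (clB : closed B).
Hypotheses (Kp : K p) (Bp : B p) (KB : ~ K `<=` B).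

Let escaping t := 0 <= t <= 1 /\ ~ dilation K t p `<=` B.

Let dilation0_subB : dilation K 0 p `<=` B.
Proof. by move=> z /dilation0_sub ->. Qed.

Let escaping_gt0 t : escaping t -> 0 < t.
Proof.
move=> [/andP[t0 _] tB]; rewrite lt0r t0 andbT.
by apply: contra_notN tB => /eqP ->.
Qed.

Let has_inf_escaping : has_inf escaping.
Proof.
split; first by exists 1; split; [rewrite lexx ler01 | rewrite dilation1].
by exists 0 => t [/andP[]].
Qed.

Let escaping_inf_le t : escaping t -> inf escaping <= t.
Proof. by move=> esc_t; apply: (ge_inf has_inf_escaping.2). Qed.

Let inf_escaping_ge0 : 0 <= inf escaping.
Proof. by apply: lb_le_inf has_inf_escaping.1 _ => t [/andP[]]. Qed.

Let inf_escaping_le1 : inf escaping <= 1.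
Proof.
by apply: escaping_inf_le; split; [rewrite lexx ler01 | rewrite dilation1].
Qed.

Lemma dilation_inf_escaping_sub : dilation K (inf escaping) p `<=` B.
Proof.
have [->|ts0] := eqVneq (inf escaping) 0; first exact: dilation0_subB.
have ts_gt0 : 0 < inf escaping by rewrite lt0r ts0 inf_escaping_ge0.
pose v n := inf escaping - inf escaping * n.+1%:R^-1.
have d0 n : 0 < inf escaping * n.+1%:R^-1 by rewrite mulr_gt0 ?invr_gt0.
have d1 n : inf escaping * n.+1%:R^-1 <= inf escaping.
  by rewrite ler_piMr ?invf_le1 ?ler1n // ltW.
move=> z tsz.
apply: (dilation_limit (p := p) (u := fun=> inf escaping) (v := v) cptK clB).
- move=> n; rewrite /v opprB addrC subrK ger0_norm; last exact: ltW.
  exact: ler_piMl (ltW _) inf_escaping_le1.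
- by move=> _.
move=> n; apply: contrapT => vB.
have : inf escaping <= v n.
  apply: escaping_inf_le; split => //.
  rewrite /v subr_ge0 d1 /=.
  by rewrite (le_trans _ inf_escaping_le1) // gerBl ltW.
by rewrite leNgt /v gtrBl d0.
Qed.

Let tn n := Num.min 1 (inf escaping + n.+1%:R^-1).

Let tn_le1 n : tn n <= 1.
Proof. by rewrite /tn ge_min lexx. Qed.

Let tn_le n : tn n <= inf escaping + n.+1%:R^-1.
Proof. by rewrite /tn ge_min lexx orbT. Qed.

Let tn_ge n : inf escaping <= tn n.
Proof. by rewrite /tn le_min inf_escaping_le1 lerDl invr_ge0 ler0n. Qed.

Let dist_tn_inf n : `|tn n - inf escaping| <= n.+1%:R^-1.
Proof. by rewrite ger0_norm ?subr_ge0 ?tn_ge // lerBlDl tn_le. Qed.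

Let tn_nonincreasing n m : (n <= m)%N -> tn m <= tn n.
Proof.
move=> nm; rewrite [X in _ <= X]/tn le_min tn_le1 (le_trans (tn_le m)) //.
by rewrite lerD2l lef_pV2 ?posrE // ler_nat.
Qed.

Let tn_escaping n : escaping (tn n).
Proof.
have [t esc_t t_lt] : exists2 t, escaping t & t < inf escaping + n.+1%:R^-1.
  by apply: inf_adherent; rewrite ?invr_gt0.
have t_le : t <= tn n.
  by rewrite /tn le_min (ltW t_lt) andbT; case: esc_t => /andP[].
split; first by rewrite (le_trans inf_escaping_ge0 (tn_ge n)) tn_le1.
case: (esc_t) => /andP[t0 _] tB sub; apply: tB; apply: subset_trans sub.
by apply: le_dilation => //; exact: lt_le_trans (escaping_gt0 esc_t) t_le.
Qed.

Let tn_gt0 n : 0 < tn n.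
Proof. exact: escaping_gt0 (tn_escaping n). Qed.

Lemma dilation_escape (mu : {measure set (borelRd R d) -> \bar R}) (e : R) :
  (mu K < +oo)%E -> 0 < e ->
  exists t, [/\ 0 < t, t <= 1, ~ dilation K t p `<=` B &
    (mu (dilation K t p `\` B) < e%:E)%E].
Proof.
move=> muK e0.
pose F n := dilation K (tn n) p `\` B.
have mF n : measurable (F n : set (borelRd R d)).
  apply: measurableD; last exact: closed_borel_measurable.
  by apply: compact_borel_measurable; exact: compact_dilation.
have F_mono n m : (n <= m)%N -> F m `<=` F n.
  move=> nm z [mz nBz]; split => //; move: mz.
  by apply: le_dilation => //; [exact/ltW/tn_gt0 | exact: tn_nonincreasing].
have F0 : (mu (F 0%N) < +oo)%E.
  apply: le_lt_trans muK; apply: le_measure; rewrite ?inE //.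
    exact: compact_borel_measurable.
  by move=> z [z0 _]; exact: (dilation_sub cvxK Kp (tn_gt0 0) (tn_le1 0) z0).
have capF : \bigcap_n F n = set0.
  apply/seteqP; split => // z Fz; case: (Fz 0%N I) => _; apply.
  apply: (dilation_limit (p := p) (u := tn) (v := fun=> inf escaping) cptK clB).
  - exact: dist_tn_inf.
  - by move=> n; case: (Fz n I).
  - by move=> _; exact: dilation_inf_escaping_sub.
have [|n Fn] := nonincreasing_measure_lt F0 mF F_mono (a := e).
  by rewrite capF measure0 lte_fin.
by exists (tn n); split => //; exact: (tn_escaping n).2.
Qed.

Lemma dilation_escape_measure_le (mu : {measure set (borelRd R d) -> \bar R})
    (m : R) :
  (mu K < +oo)%E -> (mu (K `&` B) < m%:E)%E ->
  exists t, [/\ 0 < t, t <= 1, ~ dilation K t p `<=` B &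
    (mu (dilation K t p) <= m%:E)%E].
Proof.
move=> muK muKB.
have KB_fin : mu (K `&` B) \is a fin_num.
  by rewrite ge0_fin_numE ?measure_ge0 // (lt_le_trans muKB) ?leey.
have [|t [t0 t1 tB mut]] := dilation_escape (e := m - fine (mu (K `&` B))) muK.
  by rewrite subr_gt0 -lte_fin fineK.
exists t; split => //.
have mG : measurable (dilation K t p : set (borelRd R d)).
  by apply: compact_borel_measurable; exact: compact_dilation.
have mB : measurable (B : set (borelRd R d)) by exact: closed_borel_measurable.
have mKB : measurable (K `&` B : set (borelRd R d)).
  by apply: compact_borel_measurable; exact: compact_closedI.
have GKB : (mu (dilation K t p `&` B) <= mu (K `&` B))%E.
  apply: le_measure; rewrite ?inE //; first exact: measurableI.
  by move=> z [Gz Bz]; split => //; exact: dilation_sub Gz.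
rewrite (measureDI mu mG mB) -[m](subrK (fine (mu (K `&` B)))) EFinD.
by apply: leeD; [exact: ltW | rewrite fineK].
Qed.

End Escape.

Section Cover.
Variables (R : realType) (d : nat) (mu : {measure set (borelRd R d) -> \bar R}).
Variables (K B : set 'rV[R]_d) (c : 'rV[R]_d) (rho m : R).
Hypotheses (cvxK : Defs.convex_set K) (cptK : compact K) (clB : closed B).
Hypotheses (mu_fin : locally_finite_measure mu).
Hypotheses (rho0 : 0 < rho) (ballK : ball c rho `<=` K).
Hypotheses (KB : ~ K `<=` B) (muKB : (mu (K `&` B) < m%:E)%E).

Let Kc : K c := ballK (ballxx c rho0).

Let enlargement_mono (s t : R) : 0 <= s -> s <= t ->
  dilation K (1 + s) c `<=` dilation K (1 + t) c.
Proof.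
move=> s0 st; apply: (le_dilation cvxK Kc); first by rewrite addr_ge0.
  by rewrite lerD2l.
by rewrite ltr_pwDl ?(le_trans s0).
Qed.

Lemma enlargement_measure_lt :
  exists2 e, 0 < e & (mu (dilation K (1 + e) c `&` B) < m%:E)%E.
Proof.
have d0 n : 0 < n.+1%:R^-1 :> R by rewrite invr_gt0.
pose F n := dilation K (1 + n.+1%:R^-1) c `&` B.
have mF n : measurable (F n : set (borelRd R d)).
  apply: compact_borel_measurable; apply: compact_closedI => //.
  exact: compact_dilation.
have F_mono n k : (n <= k)%N -> F k `<=` F n.
  move=> nk z [kz Bz]; split => //; move: kz; apply: enlargement_mono.
    exact: ltW.
  by rewrite lef_pV2 ?posrE // ler_nat.
have capF : \bigcap_n F n `<=` K `&` B.
  move=> z Fz; split; last by case: (Fz 0%N I).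
  rewrite -(dilation1 K c).
  apply: (dilation_limit (p := c) (u := fun n => 1 + n.+1%:R^-1) (v := fun=> 1)
    cptK).
  - by rewrite dilation1; exact: compact_closed.
  - by move=> n; rewrite addrC addKr ger0_norm // ltW.
  - by move=> n; case: (Fz n I) => Gz _; exact: Gz.
  - by move=> _.
have F0 : (mu (F 0%N) < +oo)%E.
  by apply: mu_fin; apply: compact_closedI => //; exact: compact_dilation.
have [|n Fn] := nonincreasing_measure_lt F0 mF F_mono (a := m).
  apply: le_lt_trans muKB; apply: le_measure; rewrite ?inE //.
    exact: bigcapT_measurable.
  by apply: compact_borel_measurable; exact: compact_closedI.
by exists n.+1%:R^-1.
Qed.

Lemma cover_by_dilations : exists2 e, 0 < e &
  exists n (t : 'I_n -> R) (q : 'I_n -> 'rV[R]_d),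
    [/\ forall i, 0 < t i,
        forall i, (mu (dilation (dilation K (1 + e) c) (t i) (q i)) <= m%:E)%E,
        forall i, ~ dilation (dilation K (1 + e) c) (t i) (q i) `<=` B &
        K `&` B `<=` \bigcup_(i in [set: 'I_n])
          dilation (dilation K (1 + e) c) (t i) (q i)].
Proof.
have [e e0 muLB] := enlargement_measure_lt; exists e => //.
pose L := dilation K (1 + e) c.
have KL : K `<=` L.
  rewrite -{1}(dilation1 K c); apply: le_dilation => //.
    by rewrite lerDl ltW.
  by rewrite addr_gt0.
have cptL : compact L by exact: compact_dilation.
have LB : ~ L `<=` B by move=> LB; apply: KB; exact: subset_trans LB.
have esc p : exists t, (K `&` B) p ->
    [/\ 0 < t, (mu (dilation L t p) <= m%:E)%E, ~ dilation L t p `<=` B &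
        ball p (t * (e * rho)) `<=` dilation L t p].
  have [[Kp Bp]|] := pselect ((K `&` B) p); last by exists 0.
  have [t [t0 _ tB mut]] := dilation_escape_measure_le (convex_homothet cvxK)
    cptL clB (KL _ Kp) Bp LB (mu_fin cptL) muLB.
  exists t => _; split => //; apply: ball_dilation t0 _.
  exact: ball_sub_enlargement.
have [tp tpP] := choice esc.
have [|n [q [qKB cover]]] := @compact_ord_cover _ (K `&` B)
    (fun p => ball p (tp p * (e * rho))) (compact_closedI cptK clB).
  move=> p /tpP[t0 _ _ _]; split; first exact: ball_open.
  by apply: ballxx; rewrite !mulr_gt0.
exists n, (tp \o q), q; split => [i|i|i|z /cover[i _ qz]].
- by have [] := tpP _ (qKB i).
- by have [] := tpP _ (qKB i).
- by have [] := tpP _ (qKB i).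
- by exists i => //; have [_ _ _] := tpP _ (qKB i); apply.
Qed.

End Cover.

Theorem mainTheorem16 (R : realType) (d : nat) (C : set 'rV[R]_d)
    (mu : {measure set (borelRd R d) -> \bar R})
    (B C' : set 'rV[R]_d) :
  convex_body C ->
  locally_finite_measure mu ->
  non_degenerate C mu ->
  (0 < mu C)%E ->
  mu setT = +oo%E ->
  is_euclid_ball B ->
  (mu C <= mu B)%E ->
  is_homothet C C' ->
  (mu (C' `&` B) < mu C)%E ->
  ~ (C' `<=` B) ->
  exists (n : nat) (lam : 'I_n -> R) (x : 'I_n -> 'rV[R]_d),
    [/\ forall i, 0 < lam i,
        forall i, (mu (homothet C (lam i) (x i)) <= mu C)%E,
        forall i, ~ (homothet C (lam i) (x i) `<=` B) &
        C' `&` B `<=` \bigcup_(i in [set: 'I_n]) homothet C (lam i) (x i)].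
Proof.
move=> [cvxC cptC [c /nbhs_ballP[r /= r0 ballC]]] mu_fin _ _ _ [b [rB [_ ->]]] _
  [l [x [l0 ->]]] ltC notB.
have muC_fin : mu C \is a fin_num.
  by rewrite ge0_fin_numE ?measure_ge0 //; exact: mu_fin.
rewrite -(fineK muC_fin) in ltC *.
have [e e0 [n [t [q [t0 mut tB cover]]]]] := cover_by_dilations
  (convex_homothet cvxC) (compact_homothet cptC) (@closed_euclid_ball R d b rB)
  mu_fin (mulr_gt0 l0 r0) (ball_homothet (x := x) l0 ballC) notB ltC.
exists n, (fun i => t i * ((1 + e) * l)),
  (fun i => t i *: ((1 + e) *: x + (1 - (1 + e)) *: (l *: c + x))
            + (1 - t i) *: q i).
split => [i|i|i|z /cover[i _ zi]]; rewrite -?dilation_homothet.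
- by rewrite !mulr_gt0 // addr_gt0.
- exact: mut.
- exact: tB.
- by exists i => //; rewrite -!dilation_homothet.
Qed.
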